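(* For all $\sigma\in\Sigma_k$, $\tau\in\Sigma_l$ and $\epsilon\in Sh(k,l)$, the element $\epsilon^{-1}.(\mathbb T^\sigma\mathbb T^\tau)$ lies in $\mathbf H_{ho}$ and $$\epsilon^{-1}.(\mathbb T^\sigma\,\mathbb T^\tau)=\sum_{\zeta\in Sh(k,l)}\mathbb T^{\zeta^{-1}\circ(\sigma\otimes\tau)\circ\epsilon}.$$
   Context: A rooted forest is a finite graph each of whose components is a tree with a distinguished root; edges are oriented towards the roots, and $v\twoheadrightarrow w$ means there is an oriented path from $v$ to $w\ne v$. An ordered forest with $n$ vertices is a rooted forest with a total order on the vertices, identifying them with $\{1,\dots,n\}$; it is heap-ordered if $i\twoheadrightarrow j\Rightarrow i>j$. $\mathbf H_o$ (resp. $\mathbf H_{ho}$) is the vector space with basis ordered (resp. heap-ordered) forests, with product $\mathbb F\mathbb G$ = disjoint union where the vertices of $\mathbb G$ are shifted by the number of vertices of $\mathbb F$, and coproduct by admissible cuts $\Delta(\mathbb F)=\sum_{\vec v}\mathrm{Roo}_{\vec v}\mathbb F\otimes\mathrm{Lea}_{\vec v}\mathbb F$ ($\vec v$ a possibly empty set of pairwise $\twoheadrightarrow$-incomparable vertices; $\mathrm{Lea}_{\vec v}\mathbb F$ the subforest on $\vec v$ and all $w$ with $w\twoheadrightarrow v$ for some $v\in\vec v$; $\mathrm{Roo}_{\vec v}\mathbb F$ the subforest on the rest; orders restricted). For $\pi\in\Sigma_n$, $\pi.\mathbb F$ is the ordered forest with the same underlying rooted forest in which vertex $i$ is relabeled $\pi(i)$,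 extended linearly to the degree-$n$ part of $\mathbf H_o$. $(\sigma\circ\tau)(i)=\sigma(\tau(i))$; $(\sigma\otimes\tau)(i)=\sigma(i)$ for $i\le k$, $k+\tau(i-k)$ for $i>k$; $Sh(k,l)=\{\zeta\in\Sigma_{k+l}:\zeta^{-1}(1)<\dots<\zeta^{-1}(k),\ \zeta^{-1}(k+1)<\dots<\zeta^{-1}(k+l)\}$. $\mathbf{FQSym}$ has basis $\bigsqcup_n\Sigma_n$, product $\sigma\cdot\tau=\sum_{\epsilon\in Sh(k,l)}(\sigma\otimes\tau)\circ\epsilon$, coproduct $\Delta(\sigma)=\sum_k\sigma_1^{(k)}\otimes\sigma_2^{(k)}$ (standardizations of prefix and suffix of the word of $\sigma$). $S_{\mathbb F}=\{\sigma\in\Sigma_n:i\twoheadrightarrow j\Rightarrow\sigma^{-1}(i)>\sigma^{-1}(j)\}$, $\Theta(\mathbb F)=\sum_{\sigma\in S_{\mathbb F}}\sigma$; the restriction of $\Theta$ to $\mathbf H_{ho}$ is a Hopf algebra isomorphism onto $\mathbf{FQSym}$. For $\sigma\in\Sigma_n$, $\mathbb T^\sigma$ is the unique element of $\mathbf H_{ho}$ with $\Theta(\mathbb T^\sigma)=\sigma^{-1}$. *)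

From HB Require Import structures.
From mathcomp Require Import all_boot all_order all_algebra all_fingroup.
From Stdlib Require Import ClassicalEpsilon.
Set Implicit Arguments. Unset Strict Implicit. Unset Printing Implicit Defensive.
Import GRing.Theory.
Local Open Scope ring_scope.

(* Vertices of a forest with n vertices are 'I_n = {0,...,n-1} (0-based
   version of {1,...,n}; all order notions are preserved by i |-> i+1). *)

(* A parent map: p i = Some j means the edge i -> j (oriented towards the
   roots); p i = None means i is a root. *)
Definition pmap (n : nat) := {ffun 'I_n -> option 'I_n}.

Definition prel n (p : pmap n) : rel 'I_n := fun x y => p x == Some y.

Definition desc n (p : pmap n) (i j : 'I_n) : bool :=
  connect (prel p) i j && (i != j).

Definition forestb n (p : pmap n) : bool :=
  [forall i, forall j, prel p i j ==> ~~ connect (prel p) j i].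

Definition heapb n (p : pmap n) : bool :=
  forestb p && [forall i, forall j, desc p i j ==> (j < i)%N].

(* Degree-n part of the space spanned by parent maps; H_o (degree n) is the
   subspace of elements supported on forests, H_ho the subspace supported on
   heap-ordered forests. *)
Definition Hn (R : fieldType) n := {ffun pmap n -> R}.

Definition in_Ho (R : fieldType) n (x : Hn R n) : Prop :=
  forall p, x p != 0 -> forestb p.
Definition in_Hho (R : fieldType) n (x : Hn R n) : Prop :=
  forall p, x p != 0 -> heapb p.

(* disjoint union, vertices of the second forest shifted by k *)
Definition join k l (p1 : pmap k) (p2 : pmap l) : pmap (k + l) :=
  [ffun i => match split i with
             | inl a => omap (@lshift k l) (p1 a)
             | inr b => omap (@rshift k l) (p2 b)
             end].

Definition hmul (R : fieldType) k l (x : Hn R k) (y : Hn R l) : Hn R (k + l) :=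
  [ffun q => \sum_(p1 : pmap k) \sum_(p2 : pmap l)
                x p1 * y p2 * (join p1 p2 == q)%:R].

(* pi.F : vertex i relabeled pi(i) *)
Definition relabel n (pi : 'S_n) (p : pmap n) : pmap n :=
  [ffun j => omap pi (p (pi^-1%g j))].

Definition relabel_act (R : fieldType) n (pi : 'S_n) (x : Hn R n) : Hn R n :=
  [ffun q => \sum_(p : pmap n) x p * (relabel pi p == q)%:R].

Definition SF n (p : pmap n) : pred 'S_n :=
  fun s => [forall i, forall j, desc p i j ==> (s^-1%g j < s^-1%g i)%N].

(* Theta, with values in the degree-n part of FQSym (basis Sigma_n) *)
Definition theta (R : fieldType) n (x : Hn R n) : {ffun 'S_n -> R} :=
  [ffun s => \sum_(p : pmap n | forestb p) x p * (SF p s)%:R].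

(* T^sigma : the (unique) element of H_ho with Theta(T^sigma) = sigma^{-1} *)
Definition Tsig (R : fieldType) n (s : 'S_n) : Hn R n :=
  epsilon (inhabits (0 : Hn R n))
    (fun x => in_Hho x /\ theta x = [ffun u => ((u == s^-1)%g)%:R]).

(* composition (sigma o tau)(i) = sigma(tau(i)) *)
Definition permcomp n (s t : 'S_n) : 'S_n := (t * s)%g.

Definition tensor_fun k l (s : 'S_k) (t : 'S_l) (i : 'I_(k + l)) : 'I_(k + l) :=
  unsplit (match split i with inl a => inl (s a) | inr b => inr (t b) end).

Lemma tensor_fun_inj k l (s : 'S_k) (t : 'S_l) : injective (tensor_fun s t).
Proof.
move=> i j /(congr1 split); rewrite /tensor_fun !unsplitK => E.
rewrite -(splitK i) -(splitK j).
move: E; case: (split i) => a; case: (split j) => b //= [] /perm_inj -> //.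
Qed.

Definition ptensor k l (s : 'S_k) (t : 'S_l) : 'S_(k + l) :=
  perm (@tensor_fun_inj k l s t).

Definition shuffle k l : pred 'S_(k + l) :=
  fun z => [forall i : 'I_(k + l), forall j : 'I_(k + l),
              ((i < j)%N && ((j < k)%N || (k <= i)%N)) ==>
              (z^-1%g i < z^-1%g j)%N].
Arguments shuffle k l z : clear implicits.

(* Theta is injective on H_ho, i.e. unitriangular in suitable bases: the
   heap-ordered forest heap_of_perm t has t as linear extension and otherwise
   only lexicographically smaller ones, and since there are n! heap-ordered
   forests with n vertices, every one of them is some heap_of_perm t.  So it is
   enough to compare Theta of both sides at every permutation u.  Every
   permutation factors uniquely as zeta o (rho1 (x) rho2) with zeta a shuffle,
   and Theta(F G) at such a permutation is Theta(F)(rho1) Theta(G)(rho2);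
   relabelling by the inverse of the shuffle epsilon keeps forests
   heap-ordered and replaces the value of Theta at u by its value at
   epsilon o u.  Both sides therefore take the value 1 at u exactly when
   (sigma (x) tau) o epsilon o u is a shuffle, and 0 otherwise. *)

From Pilot Require Import Defs.
From HB Require Import structures.
From mathcomp Require Import all_boot all_order all_algebra all_fingroup zify.
From Stdlib Require Import ClassicalEpsilon.
Set Implicit Arguments. Unset Strict Implicit. Unset Printing Implicit Defensive.
Import GRing.Theory.

Local Notation pmap := Defs.pmap.

(** * Heap-ordered forests *)

Lemma connect_ltn (T : finType) (r : rel T) (f : T -> nat) :
  (forall x y, r x y -> (f y < f x)%N) ->
  forall x y, connect r x y -> x != y -> (f y < f x)%N.
Proof.
move=> r_lt x y /connectP [s]; elim: s x => [|z s IHs] x /=.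
  by move=> _ ->; rewrite eqxx.
case/andP=> rxz zs y_last _; have lt_zx := r_lt _ _ rxz.
case: (eqVneq z y) => [<- // | ne].
exact: ltn_trans (IHs z zs y_last ne) lt_zx.
Qed.

Definition heap_ordered n (p : pmap n) : Prop :=
  forall v u, p v = Some u -> (u < v)%N.

Lemma heapbP n (p : pmap n) : reflect (heap_ordered p) (heapb p).
Proof.
apply: (iffP andP) => [[/forallP acyclic /forallP desc_lt] v u pvu | hp].
  have e_vu : prel p v u by rewrite /prel pvu.
  apply: (implyP (forallP (desc_lt v) u)); rewrite /desc connect1 //=.
  apply: contraTneq e_vu => <-; apply/negP => e_vv.
  by move: (implyP (forallP (acyclic v) v) e_vv); rewrite connect0.
have edge_lt (x y : 'I_n) : prel p x y -> (y < x)%N by move/eqP; apply: hp.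
split; apply/forallP => i; apply/forallP => j; apply/implyP.
  move=> e_ij; apply: contraL (edge_lt _ _ e_ij) => c_ji; rewrite -leqNgt.
  case: (eqVneq j i) => [-> // | ne].
  by have := connect_ltn (f := @nat_of_ord n) edge_lt c_ji ne; apply: ltnW.
by case/andP => c_ij ne; have := connect_ltn (f := @nat_of_ord n) edge_lt c_ij ne.
Qed.

Lemma SF_heapP n (p : pmap n) (s : 'S_n) : heap_ordered p ->
  reflect (forall v u, p v = Some u -> (s^-1 u < s^-1 v)%N)%g (SF p s).
Proof.
move=> hp; apply: (iffP forallP) => [desc_lt v u pvu | edge_lt i].
  apply: (implyP (forallP (desc_lt v) u)); rewrite /desc connect1 /prel ?pvu //=.
  by apply: contraTneq (hp _ _ pvu) => ->; rewrite ltnn.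
apply/forallP => j; apply/implyP => /andP [c_ij ne].
by apply: (connect_ltn (f := fun x => val (s^-1 x)%g)) c_ij ne => x y /eqP /edge_lt.
Qed.

Lemma join_lshift k l (p1 : pmap k) (p2 : pmap l) a :
  join p1 p2 (lshift l a) = omap (@lshift k l) (p1 a).
Proof. by rewrite ffunE (unsplitK (inl _ a)). Qed.

Lemma join_rshift k l (p1 : pmap k) (p2 : pmap l) b :
  join p1 p2 (rshift k b) = omap (@rshift k l) (p2 b).
Proof. by rewrite ffunE (unsplitK (inr _ b)). Qed.

Lemma join_heap k l (p1 : pmap k) (p2 : pmap l) :
  heap_ordered p1 -> heap_ordered p2 -> heap_ordered (join p1 p2).
Proof.
move=> h1 h2 x u; case: (split_ordP x) => a ->.
  by rewrite join_lshift; case E : (p1 a) => [w|] //= [<-]; apply: h1 E.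
rewrite join_rshift; case E : (p2 a) => [w|] //= [<-].
by rewrite /= ltn_add2l; apply: h2 E.
Qed.

Lemma relabelE n (pi : 'S_n) (p : pmap n) v : relabel pi p (pi v) = omap pi (p v).
Proof. by rewrite ffunE permK. Qed.

Lemma relabel_heap n (pi : 'S_n) (p : pmap n) :
  (forall v u, p v = Some u -> (pi u < pi v)%N) -> heap_ordered (relabel pi p).
Proof.
move=> pi_lt j w; rewrite -(permKV pi j) relabelE.
by case E : (p _) => [u|] //= [<-]; apply: pi_lt.
Qed.

Lemma SF_relabel n (pi : 'S_n) (p : pmap n) u :
  heap_ordered p -> heap_ordered (relabel pi p) ->
  SF (relabel pi p) u = SF p (u * pi^-1)%g.
Proof.
move=> hp hpi; apply/(SF_heapP _ hpi)/(SF_heapP _ hp) => [lt_u v w pvw | lt_u j w].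
  by have := lt_u (pi v) (pi w); rewrite relabelE pvw invMg invgK !permM; apply.
rewrite -(permKV pi j) relabelE; case E : (p _) => [w'|] //= [<-].
by have := lt_u _ _ E; rewrite invMg invgK !permM.
Qed.

(** * Shuffles and tensor products *)

Lemma ptensor_lshift k l (s : 'S_k) (t : 'S_l) a :
  ptensor s t (lshift l a) = lshift l (s a).
Proof. by rewrite permE /tensor_fun (unsplitK (inl _ a)). Qed.

Lemma ptensor_rshift k l (s : 'S_k) (t : 'S_l) b :
  ptensor s t (rshift k b) = rshift k (t b).
Proof. by rewrite permE /tensor_fun (unsplitK (inr _ b)). Qed.

Lemma ptensorM k l (a c : 'S_k) (b d : 'S_l) :
  (ptensor a b * ptensor c d)%g = ptensor (a * c)%g (b * d)%g.
Proof.
apply/permP => x; case: (split_ordP x) => y ->.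
  by rewrite !permM !ptensor_lshift permM.
by rewrite !permM !ptensor_rshift permM.
Qed.

Lemma ptensor1 k l : ptensor (1 : 'S_k) (1 : 'S_l) = 1%g.
Proof.
apply/permP => x; case: (split_ordP x) => y ->.
  by rewrite ptensor_lshift !perm1.
by rewrite ptensor_rshift !perm1.
Qed.

Lemma ptensorV k l (s : 'S_k) (t : 'S_l) : (ptensor s t)^-1%g = ptensor s^-1 t^-1.
Proof. by apply/eqP; rewrite eq_invg_mul ptensorM !mulgV ptensor1. Qed.

Lemma ltn_homo_mono m (f : 'I_m -> nat) :
  {homo f : a b / (a < b)%N} -> {mono f : a b / (a < b)%N}.
Proof.
move=> f_lt a b; case: (ltngtP a b) => [/f_lt // | /f_lt | /val_inj -> ].
  by move/ltnW; rewrite leqNgt => /negbTE.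
by rewrite !ltnn.
Qed.

Lemma shuffleP k l (z : 'S_(k + l)) :
  reflect ((forall a b : 'I_k, a < b -> z^-1 (lshift l a) < z^-1 (lshift l b)) /\
           (forall a b : 'I_l, a < b -> z^-1 (rshift k a) < z^-1 (rshift k b)))%g
          (shuffle k l z).
Proof.
apply: (iffP forallP) => [sh | [ltL ltR] i].
  split=> a b lt_ab; apply: (implyP (forallP (sh _) _)) => /=.
    by rewrite lt_ab ltn_ord.
  by rewrite ltn_add2l lt_ab leq_addr orbT.
apply/forallP => j; apply/implyP.
case: (split_ordP i) => a ->; case: (split_ordP j) => b -> /=.
- by case/andP => /ltL.
- by have := ltn_ord a; lia.
- by have := ltn_ord b; lia.
- by rewrite ltn_add2l => /andP [/ltR].
Qed.

Section ShuffleMono.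
Variables (k l : nat) (z : 'S_(k + l)).
Hypothesis z_shuffle : shuffle k l z.

Lemma shuffle_ltnL (a b : 'I_k) :
  (z^-1 (lshift l a) < z^-1 (lshift l b))%N%g = (a < b)%N.
Proof.
apply: (ltn_homo_mono (f := fun a => nat_of_ord (z^-1 (lshift l a))%g)).
by case/shuffleP: z_shuffle.
Qed.

Lemma shuffle_ltnR (a b : 'I_l) :
  (z^-1 (rshift k a) < z^-1 (rshift k b))%N%g = (a < b)%N.
Proof.
apply: (ltn_homo_mono (f := fun a => nat_of_ord (z^-1 (rshift k a))%g)).
by case/shuffleP: z_shuffle.
Qed.
End ShuffleMono.

Lemma SF_join k l (p1 : pmap k) (p2 : pmap l) (z : 'S_(k + l)) r1 r2 :
  heap_ordered p1 -> heap_ordered p2 -> shuffle k l z ->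
  SF (join p1 p2) (z * ptensor r1 r2)%g = SF p1 r1 && SF p2 r2.
Proof.
move=> h1 h2 z_sh; have h12 := join_heap h1 h2.
have wV x : (z * ptensor r1 r2)^-1%g x = z^-1%g (ptensor r1^-1 r2^-1 x).
  by rewrite invMg permM ptensorV.
apply/(SF_heapP _ h12)/andP => [lt_w | [/(SF_heapP _ h1) lt1 /(SF_heapP _ h2) lt2] x u].
  split; [apply/(SF_heapP _ h1) => a w pa | apply/(SF_heapP _ h2) => a w pa].
    have := lt_w (lshift l a) (lshift l w); rewrite join_lshift pa !wV !ptensor_lshift.
    by rewrite shuffle_ltnL //; apply.
  have := lt_w (rshift k a) (rshift k w); rewrite join_rshift pa !wV !ptensor_rshift.
  by rewrite shuffle_ltnR //; apply.
case: (split_ordP x) => a ->.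
  rewrite join_lshift; case pa : (p1 a) => [w|] //= [<-].
  by rewrite !wV !ptensor_lshift shuffle_ltnL //; apply: lt1.
rewrite join_rshift; case pa : (p2 a) => [w|] //= [<-].
by rewrite !wV !ptensor_rshift shuffle_ltnR //; apply: lt2.
Qed.

Lemma relabel_join_heap k l (e : 'S_(k + l)) (p1 : pmap k) (p2 : pmap l) :
  shuffle k l e -> heap_ordered p1 -> heap_ordered p2 ->
  heap_ordered (relabel e^-1 (join p1 p2)).
Proof.
move=> e_sh h1 h2; apply: relabel_heap => x u; case: (split_ordP x) => a ->.
  rewrite join_lshift; case pa : (p1 a) => [w|] //= [<-].
  by rewrite shuffle_ltnL //; apply: h1 pa.
rewrite join_rshift; case pa : (p2 a) => [w|] //= [<-].
by rewrite shuffle_ltnR //; apply: h2 pa.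
Qed.

Lemma card_ord_ltn n m : m <= n -> #|[pred j : 'I_n | j < m]| = m.
Proof.
move=> le_mn; rewrite -sum1_card.
by rewrite -(big_ord_widen _ (fun=> 1%N) le_mn) sum1_card card_ord.
Qed.

Lemma mono_perm_eq1 n (s : 'S_n) : {mono s : i j / i < j} -> s = 1%g.
Proof.
move=> s_mono; apply/permP => i; apply: val_inj; rewrite perm1 /=.
rewrite -[LHS](card_ord_ltn (ltnW (ltn_ord (s i)))) -sum1_card.
rewrite (reindex_inj (@perm_inj _ s)) (eq_bigl (fun j : 'I_n => j < i)) => [|j].
  by rewrite sum1_card card_ord_ltn // ltnW.
exact: s_mono.
Qed.

Section RankPerm.
Variables (n : nat) (f : 'I_n -> nat).
Hypothesis f_inj : injective f.

Definition rank_of (i : 'I_n) := #|[pred j | f j < f i]|.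

Lemma rank_of_homo i j : f i < f j -> rank_of i < rank_of j.
Proof.
move=> lt_ij; apply: proper_card; apply/properP; split.
  by apply/subsetP => x; rewrite !inE => /ltn_trans; apply.
by exists i; rewrite !inE ?lt_ij ?ltnn.
Qed.

Lemma ltn_rank_of i j : (rank_of i < rank_of j) = (f i < f j).
Proof.
case: (ltngtP (f i) (f j)) => [/rank_of_homo // | /rank_of_homo | /f_inj ->].
  by move/ltnW; rewrite leqNgt => /negbTE.
by rewrite ltnn.
Qed.

Lemma rank_of_lt i : rank_of i < n.
Proof.
rewrite -[n in _ < n]card_ord; apply: proper_card; apply/properP; split.
  exact/subsetP.
by exists i => //; apply/negP; rewrite inE /= ltnn.
Qed.

Lemma rank_of_inj : injective (fun i => Ordinal (rank_of_lt i)).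
Proof.
move=> i j /(congr1 val) /= eq_ij; apply: f_inj.
have := ltn_rank_of i j; have := ltn_rank_of j i; rewrite eq_ij ltnn.
by case: ltngtP.
Qed.

Definition rank_perm : 'S_n := perm rank_of_inj.

Lemma ltn_rank_perm i j : (rank_perm i < rank_perm j) = (f i < f j).
Proof. by rewrite !permE ltn_rank_of. Qed.
End RankPerm.

Lemma shuffle_ptensor_decomp k l (v : 'S_(k + l)) :
  exists z r1 r2, shuffle k l z /\ v = (z * ptensor r1 r2)%g.
Proof.
pose f1 a := val (v^-1 (lshift l a))%g; pose f2 b := val (v^-1 (rshift k b))%g.
have f1_inj : injective f1 by move=> a b /val_inj /perm_inj /lshift_inj.
have f2_inj : injective f2 by move=> a b /val_inj /perm_inj /rshift_inj.
set r1 := (rank_perm f1_inj)^-1%g; set r2 := (rank_perm f2_inj)^-1%g.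
exists (v * ptensor r1^-1 r2^-1)%g, r1, r2; split.
  apply/shuffleP; rewrite invMg ptensorV !invgK; split=> a b.
    have := ltn_rank_perm f1_inj (r1 a) (r1 b).
    by rewrite !permM !ptensor_lshift /r1 !permKV => ->.
  have := ltn_rank_perm f2_inj (r2 a) (r2 b).
  by rewrite !permM !ptensor_rshift /r2 !permKV => ->.
by rewrite -mulgA ptensorM !mulVg ptensor1 mulg1.
Qed.

Lemma shuffle_mul_ptensor k l (z : 'S_(k + l)) (a : 'S_k) (b : 'S_l) :
  shuffle k l z -> shuffle k l (z * ptensor a b)%g = (a == 1%g) && (b == 1%g).
Proof.
move=> z_sh; apply/idP/andP => [w_sh | [/eqP-> /eqP->]]; last by rewrite ptensor1 mulg1.
have wV x : (z * ptensor a b)^-1%g x = z^-1%g (ptensor a^-1 b^-1 x).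
  by rewrite invMg permM ptensorV.
split; rewrite -eq_invg1; apply/eqP/mono_perm_eq1 => c d.
  by rewrite -(shuffle_ltnL z_sh) -!(ptensor_lshift _ b^-1) -!wV (shuffle_ltnL w_sh).
by rewrite -(shuffle_ltnR z_sh) -!(ptensor_rshift a^-1) -!wV (shuffle_ltnR w_sh).
Qed.

(** * The heap-ordered forest of a permutation *)

Lemma card_option_oapp (T : finType) (A : pred T) :
  #|[pred o : option T | oapp A true o]| = #|A|.+1.
Proof.
rewrite (cardD1 None) inE add1n -(card_image (@Some_inj _)).
congr _.+1; apply: eq_card => -[u|]; rewrite !inE /=.
  by rewrite (mem_image (@Some_inj _)).
by apply/esym/imageP => -[].
Qed.

Definition lexlt n (s t : 'S_n) : bool :=
  [exists i : 'I_n, [forall j : 'I_n, (j < i) ==> (s j == t j)] && (s i < t i)].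

Lemma lexlt_irr n (s : 'S_n) : ~~ lexlt s s.
Proof. by apply/existsP => -[i /andP [_]]; rewrite ltnn. Qed.

Lemma lexlt_trans n (r s t : 'S_n) : lexlt r s -> lexlt s t -> lexlt r t.
Proof.
move=> /existsP [i /andP [/forallP eq_i lt_i]] /existsP [j /andP [/forallP eq_j lt_j]].
have eq_below (m x : 'I_n) : x < m -> m <= i -> m <= j -> r x = t x.
  move=> lt_xm le_mi le_mj.
  by rewrite (eqP (implyP (eq_i x) _)) ?(eqP (implyP (eq_j x) _)) // (leq_trans lt_xm).
apply/existsP; have [lt_ij | lt_ji | /val_inj eq_ij] := ltngtP i j.
- exists i; rewrite -(eqP (implyP (eq_j i) lt_ij)) lt_i andbT.
  by apply/forallP => x; apply/implyP => lt_xi; rewrite (eq_below i) // ltnW.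
- exists j; rewrite (eqP (implyP (eq_i j) lt_ji)) lt_j andbT.
  by apply/forallP => x; apply/implyP => lt_xj; rewrite (eq_below j) // ltnW.
- subst j; exists i; rewrite (ltn_trans lt_i lt_j) andbT.
  by apply/forallP => x; apply/implyP => lt_xi; rewrite (eq_below i).
Qed.

Definition lex_rank n (t : 'S_n) := #|[pred s : 'S_n | lexlt s t]|.

Lemma lex_rank_lt n (s t : 'S_n) : lexlt s t -> lex_rank s < lex_rank t.
Proof.
move=> lt_st; apply: proper_card; apply/properP; split.
  by apply/subsetP => r; rewrite !inE => /lexlt_trans; apply.
by exists s; rewrite !inE ?lt_st ?lexlt_irr.
Qed.

Section HeapOfPerm.
Variable n : nat.
Implicit Types (s t : 'S_n) (i j u v w : 'I_n).

Definition before_smaller t v u : bool := (u < v) && (t^-1 u < t^-1 v)%g.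

(* With t^-1 u read as the position of u in the word of t, the parent of v is
   the smaller vertex placed last before v. *)
Definition heap_of_perm t : pmap n :=
  [ffun v => [pick u | before_smaller t v u &
                       [forall w, before_smaller t v w ==> (t^-1 w <= t^-1 u)%g]]].

Lemma heap_of_perm_Some t v u : heap_of_perm t v = Some u ->
  before_smaller t v u /\ forall w, before_smaller t v w -> (t^-1 w <= t^-1 u)%g.
Proof.
rewrite ffunE; case: pickP => [x /andP [bx /forallP max_x] [<-] | //].
by split=> // w; apply/implyP.
Qed.

Lemma heap_of_perm_None t v : heap_of_perm t v = None -> forall u, ~~ before_smaller t v u.
Proof.
rewrite ffunE; case: pickP => // none _ u; apply/negP => bu.
have [m bm max_m] := arg_maxnP (fun w => nat_of_ord (t^-1 w)%g) bu.
by have := none m; rewrite bm; move/negP; apply; apply/forallP => w; apply/implyP/max_m.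
Qed.

Lemma heap_of_perm_heap t : heap_ordered (heap_of_perm t).
Proof. by move=> v u /heap_of_perm_Some [/andP []]. Qed.

Lemma SF_heap_of_perm t : SF (heap_of_perm t) t.
Proof.
by apply/(SF_heapP t (@heap_of_perm_heap t)) => v u /heap_of_perm_Some [/andP []].
Qed.

Lemma SF_heap_of_perm_lex s t : SF (heap_of_perm t) s -> s = t \/ lexlt s t.
Proof.
move=> /(SF_heapP s (@heap_of_perm_heap t)) s_lt.
have [-> | neq_st] := eqVneq s t; [by left | right].
have [i0 neq_i0] : exists i, s i != t i.
  apply/existsP; apply: contraNT neq_st; rewrite negb_exists => /forallP eq_st.
  by apply/eqP/permP => x; apply/eqP/negPn/eq_st.
have [i neq_i min_i] := @arg_minnP _ i0 (fun i => s i != t i) val neq_i0.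
have eq_below j : j < i -> s j = t j.
  by move=> lt_ji; apply/eqP; apply: contraTT lt_ji => /min_i; rewrite -leqNgt.
apply/existsP; exists i; apply/andP; split.
  by apply/forallP => j; apply/implyP => /eq_below ->.
rewrite ltn_neqAle val_eqE neq_i leqNgt /=; apply/negP => lt_ts.
set b := s i; set j := (t^-1 b)%g.
have lt_ij : i < j.
  have [// | lt_ji | /val_inj eq_ji] := ltngtP i j.
    by move: (eq_below _ lt_ji); rewrite permKV => /perm_inj eq_ji; rewrite eq_ji ltnn in lt_ji.
  by move: (permKV t b); rewrite -/j -eq_ji /b => eq_ti; rewrite eq_ti eqxx in neq_i.
have b_ti : before_smaller t b (t i) by rewrite /before_smaller lt_ts permK.
case E : (heap_of_perm t b) => [m|]; last by move: (heap_of_perm_None E (t i)); rewrite b_ti.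
have [_ max_m] := heap_of_perm_Some E.
have lt_mi : (s^-1 m < i)%g by have := s_lt _ _ E; rewrite permK.
have t_m : (t^-1 m = s^-1 m)%g by rewrite -[m in LHS](permKV s) (eq_below _ lt_mi) permK.
by have := max_m _ b_ti; rewrite permK t_m leqNgt lt_mi.
Qed.

Lemma heap_of_perm_inj : injective heap_of_perm.
Proof.
move=> t t' eq_tt'.
have := SF_heap_of_perm t'; rewrite -eq_tt' => /SF_heap_of_perm_lex [-> // | lt_t't].
have := SF_heap_of_perm t; rewrite eq_tt' => /SF_heap_of_perm_lex [// | lt_tt'].
by have := lexlt_irr t; rewrite (lexlt_trans lt_tt' lt_t't).
Qed.

Lemma card_heap : #|[pred p : pmap n | heapb p]| = n`!.
Proof.
pose below v := [pred o | oapp (fun u : 'I_n => u < v) true o].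
rewrite (eq_card (B := family below)) => [|p].
  rewrite card_family foldrE big_map big_enum /= fact_prod big_add1 big_mkord.
  by apply: eq_bigr => v _; rewrite card_option_oapp card_ord_ltn // ltnW.
rewrite !inE; apply/heapbP/familyP => [hp v | below_p v u pvu].
  by rewrite inE; case E : (p v) => [u|] //=; apply: hp E.
by have := below_p v; rewrite inE pvu.
Qed.

Lemma heap_of_perm_surj p : heapb p -> exists t, heap_of_perm t = p.
Proof.
move=> hp.
have sub : codom heap_of_perm \subset [pred p : pmap n | heapb p].
  by apply/subsetP => q /codomP [t ->]; rewrite inE; apply/heapbP/heap_of_perm_heap.
have card_eq : #|codom heap_of_perm| = #|[pred p : pmap n | heapb p]|.
  by rewrite card_codom ?card_heap ?card_Sn //; apply: heap_of_perm_inj.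
by have := subset_cardP card_eq sub p; rewrite inE hp => /codomP [t ->]; exists t.
Qed.
End HeapOfPerm.

Local Open Scope ring_scope.

(** * Theta on H_ho *)

Lemma sum_neq0 (V : nmodType) (I : finType) (P : pred I) (F : I -> V) :
  \sum_(i | P i) F i != 0 -> exists2 i, P i & F i != 0.
Proof.
move=> nz; suff /existsP [i /andP [Pi nz_i]] : [exists i, P i && (F i != 0)] by exists i.
apply: contraNT nz; rewrite negb_exists => /forallP none.
by rewrite big1 // => i Pi; apply/eqP; move: (none i); rewrite Pi negbK.
Qed.

Lemma sum_indicator (R : pzSemiRingType) (T : finType) (a : T) (F : T -> R) :
  \sum_q (a == q)%:R * F q = F a.
Proof.
rewrite (bigD1 a) //= eqxx mul1r big1 ?addr0 // => q neq_qa.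
by rewrite eq_sym (negbTE neq_qa) mul0r.
Qed.

Section Theta.
Variable R : fieldType.

Lemma in_Hho_sum n (I : finType) (P : pred I) (F : I -> Hn R n) :
  (forall i, P i -> in_Hho (F i)) -> in_Hho (\sum_(i | P i) F i).
Proof. by move=> hF p; rewrite sum_ffunE => /sum_neq0 [i /hF]; apply. Qed.

Lemma in_HhoB n (x y : Hn R n) : in_Hho x -> in_Hho y -> in_Hho (x - y).
Proof.
move=> hx hy p; rewrite !ffunE; have [x0 | /hx //] := eqVneq (x p) 0.
by rewrite x0 sub0r oppr_eq0 => /hy.
Qed.

Lemma theta_is_zmod_morphism n : zmod_morphism (@theta R n).
Proof.
move=> x y; apply/ffunP => s; rewrite !ffunE -sumrB.
by apply: eq_bigr => p _; rewrite !ffunE mulrBl.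
Qed.

HB.instance Definition _ n :=
  GRing.isZmodMorphism.Build (Hn R n) {ffun 'S_n -> R} (@theta R n)
    (@theta_is_zmod_morphism n).

Lemma theta_Hho n (x : Hn R n) s : in_Hho x ->
  theta x s = \sum_(p : pmap n) x p * (SF p s)%:R.
Proof.
move=> hx; rewrite ffunE big_mkcond; apply: eq_bigr => p _.
have [-> | /hx/andP [-> //]] := eqVneq (x p) 0.
by rewrite mul0r if_same.
Qed.

Lemma theta_at_max_rank n (x : Hn R n) t : in_Hho x ->
  (forall t', x (heap_of_perm t') != 0 -> (lex_rank t' <= lex_rank t)%N) ->
  theta x t = x (heap_of_perm t).
Proof.
move=> hx max_t; rewrite theta_Hho // (bigD1 (heap_of_perm t)) //=.
rewrite SF_heap_of_perm mulr1 big1 ?addr0 // => p neq_p.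
have [-> | nz_p] := eqVneq (x p) 0; first by rewrite mul0r.
have [t' def_p] := heap_of_perm_surj (hx _ nz_p).
case SF_p : (SF p t); last by rewrite mulr0.
move: SF_p; rewrite -def_p => /SF_heap_of_perm_lex [eq_tt' | lt_tt'].
  by move: neq_p; rewrite -def_p eq_tt' eqxx.
have := leq_trans (lex_rank_lt lt_tt') (max_t t' _).
by rewrite ltnn def_p => /(_ nz_p).
Qed.

Lemma theta_Hho_inj n (x y : Hn R n) : in_Hho x -> in_Hho y -> theta x = theta y -> x = y.
Proof.
move=> hx hy /eqP; rewrite -subr_eq0 -raddfB => /eqP theta0; apply/eqP; rewrite -subr_eq0.
move: (x - y) (in_HhoB hx hy) theta0 => {hx hy}x hx theta0.
apply/eqP/ffunP => p0; rewrite ffunE; apply/eqP; apply: contraT => nz.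
have [t0 def_p0] := heap_of_perm_surj (hx _ nz); rewrite -def_p0 in nz.
have [t nz_t max_t] := @arg_maxnP _ t0 (fun t => x (heap_of_perm t) != 0) (@lex_rank n) nz.
by move: nz_t; rewrite -theta_at_max_rank // theta0 ffunE eqxx.
Qed.

Definition delta n (t : 'S_n) : {ffun 'S_n -> R} := [ffun u => (u == t)%:R].

Lemma sum_delta n (P : pred 'S_n) : \sum_(t | P t) delta t = [ffun u => (P u)%:R].
Proof.
apply/ffunP => u; rewrite sum_ffunE ffunE; case Pu : (P u).
  rewrite (bigD1 u) //= ffunE eqxx big1 ?addr0 // => t /andP [_ neq_tu].
  by rewrite ffunE eq_sym (negbTE neq_tu).
by rewrite big1 // => t Pt; rewrite ffunE; case: eqVneq => // eq_ut; rewrite eq_ut Pt in Pu.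
Qed.

Definition forest_vec n (p : pmap n) : Hn R n := [ffun q => (q == p)%:R].

Lemma in_Hho_forest_vec n (p : pmap n) : heapb p -> in_Hho (forest_vec p).
Proof. by move=> hp q; rewrite ffunE; have [-> | _] := eqVneq q p; rewrite ?eqxx. Qed.

Lemma theta_forest_vec n (p : pmap n) : heapb p ->
  theta (forest_vec p) = [ffun u => (SF p u)%:R].
Proof.
move=> hp; apply/ffunP => u; rewrite theta_Hho; last exact: in_Hho_forest_vec.
rewrite (bigD1 p) //= !ffunE eqxx mul1r big1 ?addr0 // => q neq_qp.
by rewrite ffunE (negbTE neq_qp) mul0r.
Qed.

Lemma Tsig_of_exists n (s : 'S_n) : (exists2 x, in_Hho x & theta x = delta s^-1) ->
  in_Hho (Tsig R s) /\ theta (Tsig R s) = delta s^-1.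
Proof.
case=> x hx theta_x; pose P x := in_Hho x /\ theta x = delta s^-1.
by apply: (epsilon_spec (inhabits (0 : Hn R n)) P); exists x.
Qed.

(* Induction on the lexicographic rank: Theta maps the indicator of
   heap_of_perm t to t plus lexicographically smaller permutations. *)
Lemma theta_onto_delta n (t : 'S_n) : exists2 x, in_Hho x & theta x = delta t.
Proof.
have [m lt_tm] := ubnP (lex_rank t); elim: m t lt_tm => // m IHm t lt_tm.
pose P s := SF (heap_of_perm t) s && (s != t).
have Tsig_P s : P s -> in_Hho (Tsig R s^-1) /\ theta (Tsig R s^-1) = delta s.
  case/andP => SF_s neq_st; rewrite -[in delta s](invgK s); apply: Tsig_of_exists.
  rewrite invgK; apply: IHm; have [eq_st | lt_st] := SF_heap_of_perm_lex SF_s.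
    by rewrite eq_st eqxx in neq_st.
  exact: leq_trans (lex_rank_lt lt_st) lt_tm.
have heap_t : heapb (heap_of_perm t) by apply/heapbP/heap_of_perm_heap.
exists (forest_vec (heap_of_perm t) - \sum_(s | P s) Tsig R s^-1).
  by apply: in_HhoB (in_Hho_forest_vec heap_t) (in_Hho_sum _) => s /Tsig_P [].
rewrite raddfB raddf_sum (eq_bigr _ (fun s Ps => proj2 (Tsig_P s Ps))) sum_delta.
rewrite /= theta_forest_vec //; apply/ffunP => u; rewrite !ffunE /P.
have [-> | neq_ut] := eqVneq u t; first by rewrite SF_heap_of_perm andbF subr0.
by rewrite andbT subrr.
Qed.


Lemma Tsig_Hho n (s : 'S_n) : in_Hho (Tsig R s).
Proof. by have [] := Tsig_of_exists (theta_onto_delta s^-1). Qed.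

Lemma theta_Tsig n (s : 'S_n) : theta (Tsig R s) = delta s^-1.
Proof. by have [] := Tsig_of_exists (theta_onto_delta s^-1). Qed.

Lemma delta_mulr n (t c u : 'S_n) : delta (t * c)%g u = delta t (u * c^-1)%g.
Proof. by rewrite !ffunE -(can2_eq (mulgKV c) (mulgK c)). Qed.

Section Relabel.
Variables (n : nat) (pi : 'S_n) (x : Hn R n).
Hypothesis heap_supp : forall p, x p != 0 -> heap_ordered p /\ heap_ordered (relabel pi p).

Lemma relabel_act_Hho : in_Hho (relabel_act pi x).
Proof.
move=> q; rewrite ffunE => /sum_neq0 [p _].
have [<- nz | neq] := eqVneq (relabel pi p) q; last by rewrite mulr0 eqxx.
by apply/heapbP; apply: (proj2 (heap_supp _)); apply: contraNneq nz => ->; rewrite mul0r.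
Qed.

Lemma theta_relabel_act u : theta (relabel_act pi x) u = theta x (u * pi^-1)%g.
Proof.
have hx p : x p != 0 -> heapb p by move/heap_supp => [/heapbP].
rewrite (theta_Hho _ relabel_act_Hho) (theta_Hho _ hx).
under eq_bigr => q _ do rewrite ffunE mulr_suml.
rewrite exchange_big /=; apply: eq_bigr => p _.
under eq_bigr => q _ do rewrite -mulrA.
rewrite -mulr_sumr sum_indicator.
have [-> | /heap_supp [hp hpi]] := eqVneq (x p) 0; first by rewrite !mul0r.
by rewrite SF_relabel.
Qed.
End Relabel.

Lemma hmul_supp k l (x : Hn R k) (y : Hn R l) q : hmul x y q != 0 ->
  exists p1 p2, [/\ x p1 != 0, y p2 != 0 & join p1 p2 = q].
Proof.
rewrite ffunE => /sum_neq0 [p1 _ /sum_neq0 [p2 _]].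
have [<- nz | neq] := eqVneq (join p1 p2) q; last by rewrite mulr0 eqxx.
exists p1, p2; split=> //; apply: contraNneq nz => ->; rewrite ?mul0r //.
by rewrite mulr0 mul0r.
Qed.

Lemma hmul_Hho k l (x : Hn R k) (y : Hn R l) : in_Hho x -> in_Hho y -> in_Hho (hmul x y).
Proof.
move=> hx hy q /hmul_supp [p1 [p2 [/hx/heapbP h1 /hy/heapbP h2 <-]]].
exact/heapbP/join_heap.
Qed.

Lemma theta_hmul k l (x : Hn R k) (y : Hn R l) (z : 'S_(k + l)) r1 r2 :
  in_Hho x -> in_Hho y -> shuffle k l z ->
  theta (hmul x y) (z * ptensor r1 r2)%g = theta x r1 * theta y r2.
Proof.
move=> hx hy z_sh; rewrite (theta_Hho _ (hmul_Hho hx hy)) (theta_Hho _ hx) (theta_Hho _ hy).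
rewrite big_distrlr /=.
rewrite (eq_bigr (fun q => \sum_p1 \sum_p2
    x p1 * y p2 * ((join p1 p2 == q)%:R * (SF q (z * ptensor r1 r2)%g)%:R))); last first.
  move=> q _; rewrite ffunE mulr_suml; apply: eq_bigr => p1 _.
  by rewrite mulr_suml; apply: eq_bigr => p2 _; rewrite mulrA.
rewrite exchange_big /=; apply: eq_bigr => p1 _.
rewrite exchange_big /=; apply: eq_bigr => p2 _.
rewrite -mulr_sumr sum_indicator.
have [-> | /hx/heapbP h1] := eqVneq (x p1) 0; first by rewrite !mul0r.
have [-> | /hy/heapbP h2] := eqVneq (y p2) 0; first by rewrite !(mulr0, mul0r).
by rewrite SF_join // -mulnb natrM mulrACA.
Qed.

Lemma theta_hmul_Tsig k l (s : 'S_k) (t : 'S_l) w :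
  theta (hmul (Tsig R s) (Tsig R t)) w = (shuffle k l (w * ptensor s t)%g)%:R.
Proof.
have [z [r1 [r2 [z_sh ->]]]] := shuffle_ptensor_decomp w.
have hs := Tsig_Hho (s := s); have ht := Tsig_Hho (s := t).
rewrite theta_hmul // !theta_Tsig !ffunE -mulgA ptensorM shuffle_mul_ptensor //.
by rewrite (eq_mulgV1 r1) (eq_mulgV1 r2) !invgK -natrM mulnb.
Qed.
End Theta.

Theorem mainTheorem10 (R : fieldType) (k l : nat) (s : 'S_k) (t : 'S_l)
    (e : 'S_(k + l)) :
  shuffle k l e ->
  in_Hho (relabel_act e^-1%g (hmul (Tsig R s) (Tsig R t))) /\
  relabel_act e^-1%g (hmul (Tsig R s) (Tsig R t)) =
    \sum_(z : 'S_(k + l) | shuffle k l z)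
       Tsig R (permcomp (permcomp z^-1%g (ptensor s t)) e).
Proof.
move=> e_sh; set X := hmul _ _.
have heap_X p : X p != 0 -> heap_ordered p /\ heap_ordered (relabel e^-1 p).
  case/hmul_supp => p1 [p2 [/Tsig_Hho/heapbP h1 /Tsig_Hho/heapbP h2 <-]].
  by split; [exact: join_heap | exact: relabel_join_heap].
have X_Hho := relabel_act_Hho heap_X.
split=> //; apply: theta_Hho_inj => //; first by apply: in_Hho_sum => z _; apply: Tsig_Hho.
apply/ffunP => u; rewrite theta_relabel_act // invgK theta_hmul_Tsig raddf_sum sum_ffunE /=.
under eq_bigr => z _ do rewrite theta_Tsig /permcomp !invMg invgK -mulgA delta_mulr.
by rewrite -sum_ffunE sum_delta ffunE invMg !invgK mulgA.
Qed.
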